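(* Consider $f:\mathbb R^n\to\mathbb R$ convex and continuously differentiable, $A\in\mathbb R^{m\times n}$, $b\in\mathbb R^m$, with nonempty KKT set $\Omega$. Let $\{(x_k,\lambda_k)\}_{k\ge0}$ be generated by the algorithm described in the context (Case I or Case II), write $z_k=(x_k,\lambda_k)$, $\bar z_k=(\bar x_k,\bar\lambda_k)$, and fix $z^*=(x^*,\lambda^* )\in\Omega$. Define, for $k\ge1$, $w_k=\eta(z_k-z^* )+(t_k-1)(z_k-z_{k-1})$ and $B_k=\frac12\|w_k\|_M^2+\frac{\eta(1-\eta)}2\|z_k-z^*\|_M^2$. Then for every $k\ge1$, $B_{k+1}-B_k=-\eta t_{k+1}\langle x_{k+1}-x^*,\,g_{k+1}+\beta A^\top(Ax_{k+1}-b)+A^\top\lambda^*\rangle - t_{k+1}(t_{k+1}-\eta)\langle x_{k+1}-x_k,\,g_{k+1}+\beta A^\top(Ax_{k+1}-b)+A^\top\lambda^*\rangle-(1-\eta)(t_{k+1}-\tfrac12)\|z_{k+1}-z_k\|_M^2-\frac{t_{k+1}^2}{2}\|z_{k+1}-\bar z_k\|_M^2$, where $g_{k+1}=\nabla f(x_{k+1})$ in Case I and $g_{k+1}=\nabla f(\bar x_k)$ in Case II.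
   Context: The KKT set is $\Omega=\{(x^*,\lambda^* ): Ax^*=b,\ \nabla f(x^* )+A^\top\lambda^*=0\}$. For $z=(x,\lambda)$, $\|z\|_M^2=\frac1\gamma\|x\|^2+\frac1\delta\|\lambda\|^2$. Parameter sequence: $\{t_k\}_{k\ge1}$ is nondecreasing, $t_1=1$, $t_k>1$ for all $k>2$, $t_k\to+\infty$, and $t_{k+1}^2-t_k^2\le\rho t_{k+1}$ for all $k\ge 1$, with fixed $\rho\in(0,1]$. Fix $\eta\in[\rho,1]$, $\gamma>0$, $\delta>0$, $\beta\ge0$. Algorithm: initial points $x_0=x_1\in\mathbb R^n$, $\lambda_0=\lambda_1\in\mathbb R^m$. For $k=1,2,\dots$: set $\alpha_k=(t_{k+1}-\eta)/\eta$, $c_k=t_{k+1}/\eta$, $\bar x_k=x_k+\frac{t_k-1}{t_{k+1}}(x_k-x_{k-1})$, $\bar\lambda_k=\lambda_k+\frac{t_k-1}{t_{k+1}}(\lambda_k-\lambda_{k-1})$, $p_k=c_k\bar\lambda_k-\alpha_k\lambda_k$, $r_k=\alpha_kAx_k+b$. Case I ($f$ convex and $C^1$): $x_{k+1}=\arg\min_{x}\{f(x)+\frac\beta2\|Ax-b\|^2+\frac1{2\gamma}\|x-\bar x_k\|^2+\langle p_k,Ax-b\rangle+\frac\delta2\|c_kAx-r_k\|^2\}$. Case II ($f$ convex with $L$-Lipschitz gradient, and $\gamma\le 1/L$): $x_{k+1}=\arg\min_{x}\{\langle\nabla f(\bar x_k),x\rangle+\frac\beta2\|Ax-b\|^2+\frac1{2\gamma}\|x-\bar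 x_k\|^2+\langle p_k,Ax-b\rangle+\frac\delta2\|c_kAx-r_k\|^2\}$. Then $\lambda_{k+1}=\bar\lambda_k+\delta(c_kAx_{k+1}-r_k)$. *)

From HB Require Import structures.
From mathcomp Require Import all_boot all_order all_algebra.
From mathcomp Require Import all_classical all_reals all_analysis.
Set Implicit Arguments. Unset Strict Implicit. Unset Printing Implicit Defensive.
Import Order.TTheory GRing.Theory Num.Theory.
Import numFieldNormedType.Exports.
Local Open Scope ring_scope.

Section Defs.
Context {R : realType}.

Definition dotv {n : nat} (u v : 'cV[R]_n) : R := (u^T *m v) 0 0.
Definition sqn {n : nat} (u : 'cV[R]_n) : R := dotv u u.
Definition enorm {n : nat} (u : 'cV[R]_n) : R := Num.sqrt (sqn u).

Definition grad {n : nat} (f : 'cV[R]_n -> R) (x : 'cV[R]_n) : 'cV[R]_n :=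
  \col_i ('D_(delta_mx i 0) f x).

Definition convex_fun {n : nat} (f : 'cV[R]_n -> R) : Prop :=
  forall (x y : 'cV[R]_n) (a : R), 0 <= a <= 1 ->
    f (a *: x + (1 - a) *: y) <= a * f x + (1 - a) * f y.

Definition C1 {n : nat} (f : 'cV[R]_n -> R) : Prop :=
  (forall x, differentiable f x) /\ continuous (grad f).

Definition KKT {n m : nat} (f : 'cV[R]_n -> R) (A : 'M[R]_(m, n)) (b : 'cV[R]_m)
  (xs : 'cV[R]_n) (ls : 'cV[R]_m) : Prop :=
  A *m xs = b /\ grad f xs + A^T *m ls = 0.

(* ||z||_M^2 for z = (x, lambda) *)
Definition Mnorm2 {n m : nat} (gamma delta : R) (x : 'cV[R]_n) (l : 'cV[R]_m) : R :=
  gamma^-1 * sqn x + delta^-1 * sqn l.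

Definition alpha_ (eta : R) (t : nat -> R) (k : nat) : R := (t k.+1 - eta) / eta.
Definition c_ (eta : R) (t : nat -> R) (k : nat) : R := t k.+1 / eta.
Definition xbar {n : nat} (t : nat -> R) (x : nat -> 'cV[R]_n) (k : nat) : 'cV[R]_n :=
  x k + ((t k - 1) / t k.+1) *: (x k - x k.-1).
Definition p_ {m : nat} (eta : R) (t : nat -> R) (l : nat -> 'cV[R]_m) (k : nat) : 'cV[R]_m :=
  c_ eta t k *: xbar t l k - alpha_ eta t k *: l k.
Definition r_ {n m : nat} (eta : R) (t : nat -> R) (A : 'M[R]_(m, n)) (b : 'cV[R]_m)
  (x : nat -> 'cV[R]_n) (k : nat) : 'cV[R]_m :=
  alpha_ eta t k *: (A *m x k) + b.

Definition subobj_rest {n m : nat} (eta gamma delta beta : R) (t : nat -> R)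
  (A : 'M[R]_(m, n)) (b : 'cV[R]_m) (x : nat -> 'cV[R]_n) (l : nat -> 'cV[R]_m)
  (k : nat) (y : 'cV[R]_n) : R :=
  beta / 2 * sqn (A *m y - b) + (2 * gamma)^-1 * sqn (y - xbar t x k)
  + dotv (p_ eta t l k) (A *m y - b)
  + delta / 2 * sqn (c_ eta t k *: (A *m y) - r_ eta t A b x k).

Definition subobjI {n m : nat} (f : 'cV[R]_n -> R) (eta gamma delta beta : R)
  (t : nat -> R) (A : 'M[R]_(m, n)) (b : 'cV[R]_m) (x : nat -> 'cV[R]_n)
  (l : nat -> 'cV[R]_m) (k : nat) (y : 'cV[R]_n) : R :=
  f y + subobj_rest eta gamma delta beta t A b x l k y.

Definition subobjII {n m : nat} (f : 'cV[R]_n -> R) (eta gamma delta beta : R)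
  (t : nat -> R) (A : 'M[R]_(m, n)) (b : 'cV[R]_m) (x : nat -> 'cV[R]_n)
  (l : nat -> 'cV[R]_m) (k : nat) (y : 'cV[R]_n) : R :=
  dotv (grad f (xbar t x k)) y + subobj_rest eta gamma delta beta t A b x l k y.

Definition Bk {n m : nat} (eta gamma delta : R) (t : nat -> R)
  (x : nat -> 'cV[R]_n) (l : nat -> 'cV[R]_m) (xs : 'cV[R]_n) (ls : 'cV[R]_m)
  (k : nat) : R :=
  let wx := eta *: (x k - xs) + (t k - 1) *: (x k - x k.-1) in
  let wl := eta *: (l k - ls) + (t k - 1) *: (l k - l k.-1) in
  1 / 2 * Mnorm2 gamma delta wx wl
  + eta * (1 - eta) / 2 * Mnorm2 gamma delta (x k - xs) (l k - ls).

End Defs.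

From HB Require Import structures.
From mathcomp Require Import all_boot all_order all_algebra.
From mathcomp Require Import all_classical all_reals all_analysis.
From mathcomp Require Import ring lra.
Import Order.TTheory GRing.Theory Num.Theory.
Import numFieldNormedType.Exports.
Local Open Scope classical_set_scope.
Local Open Scope ring_scope.

(* Along every line [x_{k+1} + s v] the subproblem objective is its f-part
   (f itself, or its linearization at [xbar_k]) plus a quadratic polynomial
   in [s], so minimality of [x_{k+1}] yields the first-order condition
   <g_{k+1}, v> + slope(v) = 0 for every [v].  Using it to eliminate
   <., g_{k+1}> and substituting the multiplier update and [b = A x*], the
   identity becomes a polynomial identity in inner products of the iterates. *)

Section InnerProduct.
Context {R : realType}.

Lemma dotvE n (u v : 'cV[R]_n) : dotv u v = \sum_i u i 0 * v i 0.
Proof. by rewrite /dotv mxE; apply: eq_bigr => i _; rewrite mxE. Qed.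

Lemma dotvC n (u v : 'cV[R]_n) : dotv u v = dotv v u.
Proof. by rewrite !dotvE; apply: eq_bigr => i _; rewrite mulrC. Qed.

Lemma dotvDl n (u w v : 'cV[R]_n) : dotv (u + w) v = dotv u v + dotv w v.
Proof. by rewrite !dotvE -big_split; apply: eq_bigr => i _; rewrite mxE mulrDl. Qed.

Lemma dotvNl n (u v : 'cV[R]_n) : dotv (- u) v = - dotv u v.
Proof. by rewrite !dotvE -sumrN; apply: eq_bigr => i _; rewrite mxE mulNr. Qed.

Lemma dotvZl n a (u v : 'cV[R]_n) : dotv (a *: u) v = a * dotv u v.
Proof. by rewrite !dotvE mulr_sumr; apply: eq_bigr => i _; rewrite mxE mulrA. Qed.

Lemma dotvDr n (u w v : 'cV[R]_n) : dotv v (u + w) = dotv v u + dotv v w.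
Proof. by rewrite ![dotv v _]dotvC dotvDl. Qed.

Lemma dotvNr n (u v : 'cV[R]_n) : dotv v (- u) = - dotv v u.
Proof. by rewrite ![dotv v _]dotvC dotvNl. Qed.

Lemma dotvZr n a (u v : 'cV[R]_n) : dotv v (a *: u) = a * dotv v u.
Proof. by rewrite ![dotv v _]dotvC dotvZl. Qed.

Lemma dotv_trmxr n m (A : 'M[R]_(m, n)) u w : dotv u (A^T *m w) = dotv (A *m u) w.
Proof. by rewrite /dotv mulmxA -trmx_mul. Qed.

Lemma dotv_trmxl n m (A : 'M[R]_(m, n)) u w : dotv (A^T *m w) u = dotv w (A *m u).
Proof. by rewrite dotvC dotv_trmxr dotvC. Qed.

Lemma dotv_grad n (f : 'cV[R]_n -> R) x v :
  differentiable f x -> dotv (grad f x) v = 'D_v f x.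
Proof.
move=> df; rewrite deriveE // /dotv mxE {2}(matrix_sum_delta v) linear_sum.
apply: eq_bigr => i _; rewrite big_ord1 linearZ /= !mxE deriveE //.
by rewrite mulrC.
Qed.

(* [field] treats [dotv u v] and [dotv v u] as unrelated atoms; replacing
   every inner product by its symmetrization makes symmetry visible to it. *)
Definition dotv_sym {n} (u v : 'cV[R]_n) := (dotv u v + dotv v u) / 2.

Lemma dotv_symE n (u v : 'cV[R]_n) : dotv u v = dotv_sym u v.
Proof. by rewrite /dotv_sym dotvC; field. Qed.

End InnerProduct.

Ltac expand_dotv :=
  rewrite /sqn ?(dotvDl, dotvDr, dotvNl, dotvNr, dotvZl, dotvZr,
                 dotv_trmxr, dotv_trmxl, mulmxDr, mulmxN, mulmxBr);
  rewrite -?scalemxAr ?(dotvDl, dotvDr, dotvNl, dotvNr, dotvZl, dotvZr);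
  rewrite !dotv_symE /dotv_sym.

Lemma cvg_eq0_of_sign {R : realType} (u : R -> R) (c : R) :
  u s @[s --> 0^'] --> c -> (forall s, s != 0 -> 0 <= s * u s) -> c = 0.
Proof.
move=> uc su; apply/eqP; rewrite eq_le; apply/andP; split.
- apply: (cvgr_to_le (cvg_dnbhs_at_left uc)); near=> s.
  have s0 : s < 0 by near: s; exact: nbhs_left_lt.
  by have := su s (ltr0_neq0 s0); rewrite nmulr_rge0.
- apply: (cvgr_to_ge (cvg_dnbhs_at_right uc)); near=> s.
  have s0 : 0 < s by near: s; exact: nbhs_right_gt.
  by have := su s (lt0r_neq0 s0); rewrite pmulr_rge0.
Unshelve. all: by end_near.
Qed.

Section Subproblem.
Set Implicit Arguments.
Unset Strict Implicit.
Context {R : realType} {n m : nat}.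
Variables (eta gamma delta beta : R) (t : nat -> R).
Variables (A : 'M[R]_(m, n)) (b : 'cV[R]_m).
Variables (x : nat -> 'cV[R]_n) (l : nat -> 'cV[R]_m) (k : nat).

Let rest := subobj_rest eta gamma delta beta t A b x l k.

Definition rest_slope (y v : 'cV[R]_n) : R :=
  beta * dotv (A *m y - b) (A *m v) + gamma^-1 * dotv (y - xbar t x k) v
  + dotv (p_ eta t l k) (A *m v)
  + delta * c_ eta t k * dotv (c_ eta t k *: (A *m y) - r_ eta t A b x k) (A *m v).

Definition rest_curv (v : 'cV[R]_n) : R :=
  beta / 2 * sqn (A *m v) + (2 * gamma)^-1 * sqn v
  + delta / 2 * c_ eta t k ^+ 2 * sqn (A *m v).

Hypothesis gamma_neq0 : gamma != 0.

Lemma subobj_rest_line (y v : 'cV[R]_n) (s : R) :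
  rest (s *: v + y) = rest y + s * rest_slope y v + s ^+ 2 * rest_curv v.
Proof.
rewrite /rest /subobj_rest /rest_slope /rest_curv.
move: (p_ eta t l k) (r_ eta t A b x k) (xbar t x k) (c_ eta t k) => p r xb c.
rewrite !mulmxDr -!scalemxAr.
move: (A *m y) (A *m v) => Ay Av.
by expand_dotv; field.
Qed.

Lemma subobj_min_slope (phi : 'cV[R]_n -> R) (y v : 'cV[R]_n) (D : R) :
  (forall z, phi y + rest y <= phi z + rest z) ->
  s^-1 *: (phi (s *: v + y) - phi y) @[s --> 0^'] --> D ->
  D + rest_slope y v = 0.
Proof.
move=> ymin qD.
apply: (@cvg_eq0_of_sign _
  (fun s => s^-1 *: (phi (s *: v + y) - phi y) + rest_slope y v + s * rest_curv v)).
  rewrite -[X in _ --> X]addr0; apply: cvgD; first exact: cvgD qD (cvg_cst _).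
  rewrite -[X in _ --> X](mul0r (rest_curv v)).
  by apply: cvgMr_tmp; exact: cvg_within.
move=> s s0; have := ymin (s *: v + y); rewrite subobj_rest_line.
have -> : s * (s^-1 *: (phi (s *: v + y) - phi y) + rest_slope y v
               + s * rest_curv v)
          = phi (s *: v + y) - phi y + s * rest_slope y v + s ^+ 2 * rest_curv v.
  by rewrite -[_ *: _]/(_ * _); field.
lra.
Qed.

Lemma Bk_increment (xs : 'cV[R]_n) (ls : 'cV[R]_m) (g : 'cV[R]_n) :
  eta != 0 -> delta != 0 -> t k.+1 != 0 ->
  b = A *m xs ->
  l k.+1 = xbar t l k + delta *: (c_ eta t k *: (A *m x k.+1) - r_ eta t A b x k) ->
  (forall v, dotv g v + rest_slope (x k.+1) v = 0) ->
  let G := g + beta *: (A^T *m (A *m x k.+1 - b)) + A^T *m ls in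
  Bk eta gamma delta t x l xs ls k.+1 - Bk eta gamma delta t x l xs ls k =
    - (eta * t k.+1) * dotv (x k.+1 - xs) G
    - t k.+1 * (t k.+1 - eta) * dotv (x k.+1 - x k) G
    - (1 - eta) * (t k.+1 - 1 / 2) * Mnorm2 gamma delta (x k.+1 - x k) (l k.+1 - l k)
    - t k.+1 ^+ 2 / 2 * Mnorm2 gamma delta (x k.+1 - xbar t x k) (l k.+1 - xbar t l k).
Proof.
move=> eta_neq0 delta_neq0 t_neq0 bE lE stat G.
have dotv_G v : dotv v G =
    dotv v (beta *: (A^T *m (A *m x k.+1 - b)) + A^T *m ls) - rest_slope (x k.+1) v.
  rewrite /G -addrA dotvDr [dotv v g]dotvC.
  by rewrite (canRL (addrK _) (stat v)) sub0r [LHS]addrC.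
rewrite !dotv_G /Bk /Mnorm2 /rest_slope /= lE /p_ /r_ /c_ /alpha_ /xbar bE.
expand_dotv; field.
by rewrite t_neq0 eta_neq0 delta_neq0 gamma_neq0.
Qed.

End Subproblem.

Lemma nondecreasing_ge1 {R : realType} (t : nat -> R) :
  (forall k, (1 <= k)%N -> t k <= t k.+1) -> t 1%N = 1 ->
  forall k, (1 <= k)%N -> 1 <= t k.
Proof.
move=> t_incr t1; elim=> [//|[_ _|k IH _]]; first by rewrite t1.
exact: le_trans (IH isT) (t_incr k.+1 isT).
Qed.

Theorem lemma3p1 (R : realType) (n m : nat) (f : 'cV[R]_n -> R)
  (A : 'M[R]_(m, n)) (b : 'cV[R]_m)
  (t : nat -> R) (rho eta gamma delta beta : R)
  (x : nat -> 'cV[R]_n) (l : nat -> 'cV[R]_m)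
  (xs : 'cV[R]_n) (ls : 'cV[R]_m) (caseII : bool) :
  convex_fun f -> C1 f ->
  (* parameters *)
  0 < rho <= 1 -> rho <= eta <= 1 -> 0 < gamma -> 0 < delta -> 0 <= beta ->
  (forall k, (1 <= k)%N -> t k <= t k.+1) ->
  t 1%N = 1 ->
  (forall k, (2 < k)%N -> 1 < t k) ->
  t @ \oo --> +oo ->
  (forall k, (1 <= k)%N -> t k.+1 ^+ 2 - t k ^+ 2 <= rho * t k.+1) ->
  (* Case II: Lipschitz gradient with gamma <= 1/L *)
  (caseII -> exists L : R, 0 < L /\
     (forall y z, enorm (grad f y - grad f z) <= L * enorm (y - z)) /\
     gamma <= L^-1) ->
  (* algorithm *)
  x 0%N = x 1%N -> l 0%N = l 1%N ->
  (forall k, (1 <= k)%N -> forall y,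
     if caseII then
       subobjII f eta gamma delta beta t A b x l k (x k.+1)
         <= subobjII f eta gamma delta beta t A b x l k y
     else
       subobjI f eta gamma delta beta t A b x l k (x k.+1)
         <= subobjI f eta gamma delta beta t A b x l k y) ->
  (forall k, (1 <= k)%N ->
     l k.+1 = xbar t l k
              + delta *: (c_ eta t k *: (A *m x k.+1) - r_ eta t A b x k)) ->
  (* z* in Omega *)
  KKT f A b xs ls ->
  forall k, (1 <= k)%N ->
  let g := if caseII then grad f (xbar t x k) else grad f (x k.+1) in
  let G := g + beta *: (A^T *m (A *m x k.+1 - b)) + A^T *m ls in
  Bk eta gamma delta t x l xs ls k.+1 - Bk eta gamma delta t x l xs ls k =
    - (eta * t k.+1) * dotv (x k.+1 - xs) G
    - t k.+1 * (t k.+1 - eta) * dotv (x k.+1 - x k) G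
    - (1 - eta) * (t k.+1 - 1 / 2) * Mnorm2 gamma delta (x k.+1 - x k) (l k.+1 - l k)
    - t k.+1 ^+ 2 / 2 * Mnorm2 gamma delta (x k.+1 - xbar t x k) (l k.+1 - xbar t l k).
Proof.
move=> _ [f_diff _] /andP[rho_gt0 _] /andP[rho_le_eta _] gamma_gt0 delta_gt0 _
  t_incr t1 _ _ _ _ _ _ xmin lE [Axs _] k k_ge1.
have eta_neq0 : eta != 0 by rewrite gt_eqF //; lra.
have [gamma_neq0 delta_neq0] : gamma != 0 /\ delta != 0 by rewrite !gt_eqF.
have t_neq0 : t k.+1 != 0 by rewrite gt_eqF // (lt_le_trans ltr01) ?nondecreasing_ge1.
apply: (Bk_increment gamma_neq0 ls eta_neq0 delta_neq0 t_neq0 (esym Axs) (lE k k_ge1)).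
move=> v; case: caseII xmin => /= xmin; have ymin := xmin k k_ge1.
- apply: (subobj_min_slope gamma_neq0 ymin).
  apply: cvg_near_cst; near=> s.
  have s_neq0 : s != 0 by near: s; exact: nbhs_dnbhs_neq.
  by rewrite dotvDr dotvZr addrK -[_ *: _]/(_ * _) mulKf.
- rewrite dotv_grad //; apply: (subobj_min_slope gamma_neq0 ymin).
  exact: diff_derivable.
Unshelve. all: by end_near.
Qed.
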